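(* Let $\mathcal{A}$ be a central S-ring over a finite group $G$. Then $\mathcal{A}$ is primitive if and only if its rational closure $\mathrm{tr}(\mathcal{A})$ is primitive.
   Context: For a finite group $G$ with identity $e$ and $X\subseteq G$, write $\underline{X}=\sum_{x\in X}x\in\mathbb{Z}G$. A subring $\mathcal{A}$ of $\mathbb{Z}G$ is an S-ring over $G$ if there is a partition $\mathcal{S}(\mathcal{A})$ of $G$ (basic sets) such that $\{e\}\in\mathcal{S}(\mathcal{A})$, $X\in\mathcal{S}(\mathcal{A})\Rightarrow X^{-1}\in\mathcal{S}(\mathcal{A})$, and $\mathcal{A}$ is the $\mathbb{Z}$-span of $\{\underline{X}: X\in\mathcal{S}(\mathcal{A})\}$. An $\mathcal{A}$-subgroup is a subgroup of $G$ that is a union of basic sets; $\mathcal{A}$ is primitive if its only $\mathcal{A}$-subgroups are $\{e\}$ and $G$. $\mathcal{A}$ is central if $\mathcal{A}\subseteq\mathcal{Z}(\mathbb{Z}G)$. For an integer $m$, $X^{(m)}=\{x^m:x\in X\}$; the trace of $X$ is $\mathrm{tr}(X)=\bigcup_{\gcd(m,|G|)=1}X^{(m)}$. The rational closure of a central S-ring $\mathcal{A}$ is $\mathrm{tr}(\mathcal{A})=\mathrm{Span}_{\mathbb{Z}}\{\underline{\mathrm{tr}(X)}: X\in\mathcal{S}(\mathcal{A})\}$, which is a central S-ring over $G$ with basic sets $\mathrm{tr}(X)$, $X\in\mathcal{S}(\mathcal{A})$. *)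

From HB Require Import structures.
From mathcomp Require Import all_boot all_order all_algebra all_fingroup.
Set Implicit Arguments. Unset Strict Implicit. Unset Printing Implicit Defensive.
Import GRing.Theory.

Section SRings.
Variable gT : finGroupType.
(* The finite group G is the whole type gT, i.e. [set: gT]. *)

(* Integral group ring ZG: functions gT -> int (a = sum_g a(g) g). *)
Definition zg := {ffun gT -> int}.

Definition zmul (a b : zg) : zg :=
  [ffun g => (\sum_(x : gT) a x * b (x^-1 * g)%g)%R].

Definition ind (X : {set gT}) : zg := [ffun g => Posz (g \in X)].

Definition in_span (S : {set {set gT}}) (a : zg) : Prop :=
  exists c : {set gT} -> int,
    a = [ffun g => (\sum_(X in S) c X * ind X g)%R].

(* S is the set of basic sets of an S-ring over G (the S-ring being the
   Z-span of the underline X, X in S, which must be a subring of ZG). *)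
Definition is_Sring (S : {set {set gT}}) : Prop :=
  [/\ partition S [set: gT],
      [set 1%g] \in S,
      (forall X, X \in S -> (X^-1)%g \in S) &
      (forall X Y, X \in S -> Y \in S -> in_span S (zmul (ind X) (ind Y)))].

Definition Sring_central (S : {set {set gT}}) : Prop :=
  forall a, in_span S a -> forall b : zg, zmul a b = zmul b a.

Definition Sring_subgroup (S : {set {set gT}}) (H : {group gT}) : Prop :=
  exists2 T : {set {set gT}}, T \subset S & (H : {set gT}) = cover T.

Definition Sring_primitive (S : {set {set gT}}) : Prop :=
  forall H : {group gT}, Sring_subgroup S H ->
    (H : {set gT}) = 1%g \/ (H : {set gT}) = [set: gT].

(* trace of X: union of X^(m), m coprime to |G|; since x^|G| = 1, it suffices
   to take representatives 0 <= m < |G| of the residues mod |G|. *)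
Definition trace (X : {set gT}) : {set gT} :=
  [set y | [exists x in X, [exists m : 'I_#|gT|,
             coprime m #|gT| && (y == (x ^+ m)%g)]]].

Definition rat_closure (S : {set {set gT}}) : {set {set gT}} :=
  [set trace X | X in S].

End SRings.

From mathcomp Require Import all_boot all_order all_algebra all_fingroup.
From mathcomp Require Import cyclic.
Set Implicit Arguments. Unset Strict Implicit. Unset Printing Implicit Defensive.
Import Order.POrderTheory GRing.Theory Num.Theory.

(* A subgroup H is a union of basic sets iff it contains the basic set of each
   of its elements. The coefficients of a product of two basic quantities are
   constant on basic sets, so the basic set of x y lies in the product of the
   basic sets of x and y; by induction the basic set of a power x^m lies in H
   as soon as that of x does. Hence a subgroup that is a union of traces is a
   union of basic sets. Conversely X lies in tr(X), which lies in every
   subgroup containing X. Centrality is needed only for tr(A) to be an S-ring,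
   not for this equivalence. *)

Section SringSubgroups.
Local Open Scope group_scope.
Variable gT : finGroupType.
Implicit Types (S : {set {set gT}}) (X Y : {set gT}) (H : {group gT}).

Lemma sum_ind_partition S (D : {set gT}) (c : {set gT} -> int) g :
  partition S D -> g \in D -> (\sum_(X in S) c X * ind X g)%R = c (pblock S g).
Proof.
case/and3P => /eqP covS trivS _ gD.
have gS : g \in cover S by rewrite covS.
rewrite (bigD1 (pblock S g)) ?pblock_mem //= big1 ?addr0.
  by rewrite ffunE mem_pblock gS mulr1.
move=> X /andP [XS neX]; rewrite ffunE.
have [gX|] := boolP (g \in X); last by rewrite mulr0.
by rewrite (def_pblock trivS XS gX) eqxx in neX.
Qed.

Lemma in_span_pblock S a g h : partition S [set: gT] -> in_span S a ->
  pblock S g = pblock S h -> a g = a h.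
Proof.
move=> partS [c ->] eq_gh.
by rewrite !ffunE !(sum_ind_partition _ partS) ?inE ?eq_gh.
Qed.

Lemma zmul_ind_gt0 X Y g : (0 < zmul (ind X) (ind Y) g)%R = (g \in X * Y).
Proof.
have ge0 x h : (0 <= ind X x * ind Y h)%R by rewrite !ffunE mulr_ge0.
rewrite ffunE; apply/idP/idP => [|/mulsgP [x y xX yY ->]].
  rewrite lt_def psumr_eq0 // => /andP [/allPn [x _ nz] _].
  move: nz; rewrite /= !ffunE mulf_eq0 negb_or => /andP [xX yX].
  by rewrite -(mulKVg x g) mem_mulg //; [move: xX | move: yX]; case: (_ \in _).
rewrite (bigD1 x) //= !ffunE mulKg xX yY mul1r.
by apply: ltr_wpDr => //; apply: sumr_ge0.
Qed.

Lemma sub_trace X : X \subset trace X.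
Proof.
apply/subsetP => x xX; rewrite inE; apply/existsP; exists x; rewrite xX /=.
have gT_gt0 : 0 < #|gT| by rewrite (cardD1 1).
apply/existsP; exists (Ordinal (ltn_pmod 1 gT_gt0)).
have x_cardG : x ^+ #|gT| = 1 by rewrite -cardsT expg_cardG ?inE.
by rewrite /= coprime_modl coprime1n expg_mod // expg1 eqxx.
Qed.

Lemma mem_trace_expg X y : y \in trace X -> exists2 x, x \in X & exists m, y = x ^+ m.
Proof.
rewrite inE => /existsP [x /andP [xX /existsP [m /andP [_ /eqP ->]]]].
by exists x => //; exists m.
Qed.

Lemma trace_sub_group X H : X \subset H -> trace X \subset H.
Proof.
move=> sXH; apply/subsetP => y /mem_trace_expg [x xX [m ->]].
by rewrite groupX ?(subsetP sXH).
Qed.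

Lemma Sring_subgroupP S H : partition S [set: gT] ->
  Sring_subgroup S H <-> {in H, forall h, pblock S h \subset H}.
Proof.
move=> partS; have [_ trivS _] := and3P partS.
have in_cover h : h \in cover S by rewrite (cover_partition partS) inE.
split=> [[T sTS defH] h|sub_pblock].
  rewrite defH => /bigcupP [X XT hX].
  by rewrite (def_pblock trivS (subsetP sTS X XT) hX) (bigcup_max X).
exists (pblock S @: H).
  by apply/subsetP => _ /imsetP [h _ ->]; apply: pblock_mem.
apply/setP => h; apply/idP/bigcupP => [hH|[_ /imsetP [h' h'H ->]]].
  by exists (pblock S h); rewrite ?imset_f ?mem_pblock.
exact: subsetP (sub_pblock h' h'H) h.
Qed.

Lemma Sring_subgroup_rat_closure S H :
  Sring_subgroup S H -> Sring_subgroup (rat_closure S) H.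
Proof.
case=> T sTS defH; exists (@trace gT @: T); first exact: imsetS.
apply/eqP; rewrite eqEsubset; apply/andP; split.
  rewrite defH; apply/bigcupsP => X XT.
  by rewrite (subset_trans (sub_trace X)) // (bigcup_max (trace X)) ?imset_f.
apply/bigcupsP => _ /imsetP [X XT ->]; apply: trace_sub_group.
by rewrite defH (bigcup_max X).
Qed.

Section BasicSets.
Variable S : {set {set gT}}.
Hypothesis SringS : is_Sring S.

Let partS : partition S [set: gT]. Proof. by case: SringS. Qed.
Let trivS : trivIset S. Proof. by case/and3P: partS. Qed.

Lemma pblockM a b : pblock S (a * b) \subset pblock S a * pblock S b.
Proof.
have [_ _ _ mulS] := SringS.
have in_cover x : x \in cover S by rewrite (cover_partition partS) inE.
have spanM := mulS _ _ (pblock_mem (in_cover a)) (pblock_mem (in_cover b)).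
apply/subsetP => g g_ab; rewrite -zmul_ind_gt0.
rewrite (in_span_pblock partS spanM (same_pblock trivS g_ab)) zmul_ind_gt0.
by rewrite mem_mulg // mem_pblock.
Qed.

Lemma pblockX_sub_group x m H :
  pblock S x \subset H -> pblock S (x ^+ m) \subset H.
Proof.
have [_ S1 _ _] := SringS.
move=> sxH; elim: m => [|m IHm].
  by rewrite (def_pblock trivS S1 (set11 1)) sub1set group1.
by rewrite expgSr (subset_trans (pblockM _ _)) // mul_subG.
Qed.

Lemma rat_closure_Sring_subgroup H :
  Sring_subgroup (rat_closure S) H -> Sring_subgroup S H.
Proof.
case=> T sTS defH; apply/(Sring_subgroupP _ partS) => h hH.
have /bigcupP [B TB Bh] : h \in cover T by rewrite -defH.
have /imsetP [X XS defB] := subsetP sTS B TB.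
move: Bh; rewrite defB => /mem_trace_expg [x xX [m ->]].
apply: pblockX_sub_group; rewrite (def_pblock trivS XS xX).
by rewrite (subset_trans (sub_trace X)) // -defB defH (bigcup_max B).
Qed.

End BasicSets.
End SringSubgroups.

Theorem proposition3p2 (gT : finGroupType) (S : {set {set gT}}) :
  is_Sring S -> Sring_central S ->
  (Sring_primitive S <-> Sring_primitive (rat_closure S)).
Proof.
move=> SringS _; split=> primS H sH; apply: primS.
  exact: rat_closure_Sring_subgroup.
exact: Sring_subgroup_rat_closure.
Qed.
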